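(* Let $\varphi:\mathbb{R}^n\to\mathbb{R}$ be of class $\mathcal{C}^{1,1}$ and let $x^0\in\mathbb{R}^n$ be such that, with $\Omega:=\{x\mid\varphi(x)\le\varphi(x^0)\}$, $\partial^2\varphi(x)$ is positive-definite for every $x\in\Omega$ (i.e. $\langle z,u\rangle>0$ for all $u\ne0$, $z\in\partial^2\varphi(x)(u)$) and $\Omega$ is bounded. Then there exists $\kappa>0$ such that for every $x\in\Omega$, $\langle z,w\rangle\ge\kappa\|w\|^2$ whenever $w\in\mathbb{R}^n$ and $z\in\partial^2\varphi(x)(w)$.
   Context: A function $\varphi:\mathbb{R}^n\to\mathbb{R}$ is of class $\mathcal{C}^{1,1}$ if it is continuously differentiable and $\nabla\varphi$ is Lipschitz continuous around every point. Regular normal cone: $\widehat N_\Omega(\bar z):=\{v\mid \limsup_{z\to\bar z,\,z\in\Omega}\langle v,z-\bar z\rangle/\|z-\bar z\|\le 0\}$; limiting normal cone $N_\Omega(\bar z)$: all $v$ with $z_k\to\bar z$, $z_k\in\Omega$, $v_k\to v$, $v_k\in\widehat N_\Omega(z_k)$. Coderivative: $D^*F(\bar x,\bar y)(v):=\{u\mid(u,-v)\in N_{\operatorname{gph}F}(\bar x,\bar y)\}$. $\partial^2\varphi(x)(u):=D^*(\nabla\varphi)(x,\nabla\varphi(x))(u)$. *)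

From HB Require Import structures.
From mathcomp Require Import all_boot all_order all_algebra.
From mathcomp Require Import reals.
Set Implicit Arguments. Unset Strict Implicit. Unset Printing Implicit Defensive.
Import Order.TTheory GRing.Theory Num.Theory.
Local Open Scope ring_scope.

Section Defs.
Variables (R : realType) (n : nat).
Notation V := 'rV[R]_n.

Definition dotp (u v : V) : R := \sum_(i < n) u ord0 i * v ord0 i.
Definition enorm (u : V) : R := Num.sqrt (dotp u u).

Definition dotp2 (p q : V * V) : R := dotp p.1 q.1 + dotp p.2 q.2.
Definition enorm2 (p : V * V) : R := Num.sqrt (dotp2 p p).

Definition is_gradient (phi : V -> R) (g : V -> V) : Prop :=
  forall x eps, 0 < eps -> exists2 delta, 0 < delta &
    forall y, enorm (y - x) < delta ->
      `|phi y - phi x - dotp (g x) (y - x)| <= eps * enorm (y - x).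

Definition continuous_map (g : V -> V) : Prop :=
  forall x eps, 0 < eps -> exists2 delta, 0 < delta &
    forall y, enorm (y - x) < delta -> enorm (g y - g x) < eps.

Definition locally_lipschitz (g : V -> V) : Prop :=
  forall x, exists L, exists2 r, 0 < r &
    forall y1 y2, enorm (y1 - x) < r -> enorm (y2 - x) < r ->
      enorm (g y1 - g y2) <= L * enorm (y1 - y2).

Definition C11 (phi : V -> R) (g : V -> V) : Prop :=
  [/\ is_gradient phi g, continuous_map g & locally_lipschitz g].

(* Regular normal cone to Omega (subset of R^n x R^n) at zbar:
   limsup_{z -> zbar, z in Omega} <v, z - zbar>/||z - zbar|| <= 0 *)
Definition regular_normal (Omega : V * V -> Prop) (zbar v : V * V) : Prop :=
  forall eps, 0 < eps -> exists2 delta, 0 < delta &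
    forall z, Omega z -> 0 < enorm2 (z - zbar) -> enorm2 (z - zbar) < delta ->
      dotp2 v (z - zbar) <= eps * enorm2 (z - zbar).

Definition seq_cvg2 (u : nat -> V * V) (l : V * V) : Prop :=
  forall eps, 0 < eps -> exists N, forall k, (N <= k)%N -> enorm2 (u k - l) < eps.

Definition limiting_normal (Omega : V * V -> Prop) (zbar v : V * V) : Prop :=
  exists (zs vs : nat -> V * V),
    [/\ forall k, Omega (zs k), seq_cvg2 zs zbar, seq_cvg2 vs v
      & forall k, regular_normal Omega (zs k) (vs k)].

Definition graph (F : V -> V) : V * V -> Prop := fun p => p.2 = F p.1.

(* Coderivative of a single-valued map F at (xbar, ybar): u in D*F(xbar,ybar)(v) *)
Definition coderiv (F : V -> V) (xbar ybar v u : V) : Prop :=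
  limiting_normal (graph F) (xbar, ybar) (u, - v).

(* Generalized Hessian: z in d^2 phi(x)(u), where g = grad phi *)
Definition gen_hessian (g : V -> V) (x u z : V) : Prop :=
  coderiv g x (g x) u z.

End Defs.

(* If no kappa works, there are x_k in Omega and z_k in d^2 phi(x_k)(w_k) with
   <z_k, w_k> < |w_k|^2 / (k+1); as the coderivative is positively homogeneous
   we may normalize |(w_k, z_k)| = 1.  Since Omega is bounded, (x_k, w_k, z_k)
   has a cluster point (x, w, z).  Continuity of phi keeps x in Omega;
   continuity of grad phi and closedness of the limiting normal cone give
   z in d^2 phi(x)(w), and <z, w> <= 0.  The local Lipschitz constant L of
   grad phi bounds |z| <= L |w|, so w <> 0, contradicting positive
   definiteness at x. *)

From HB Require Import structures.
From mathcomp Require Import all_boot all_order all_algebra.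
From mathcomp Require Import reals.
From mathcomp Require Import boolp classical_sets topology normedtype.
From mathcomp Require Import ring lra.
Import Order.TTheory GRing.Theory Num.Theory.
Set Implicit Arguments. Unset Strict Implicit. Unset Printing Implicit Defensive.
Local Open Scope ring_scope.

Section EuclideanSpace.
Variables (R : realType) (n : nat).
Notation V := 'rV[R]_n.
Implicit Types (u v w : V) (a b : R).

Lemma dotpC u v : dotp u v = dotp v u.
Proof. by apply: eq_bigr => i _; rewrite mulrC. Qed.

Lemma dotpDl u v w : dotp (u + v) w = dotp u w + dotp v w.
Proof. by rewrite /dotp -big_split; apply: eq_bigr => i _; rewrite mxE mulrDl. Qed.

Lemma dotpZl a u v : dotp (a *: u) v = a * dotp u v.
Proof. by rewrite /dotp mulr_sumr; apply: eq_bigr => i _; rewrite mxE mulrA. Qed.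

Lemma dotpNl u v : dotp (- u) v = - dotp u v.
Proof. by rewrite -scaleN1r dotpZl mulN1r. Qed.

Lemma dotpBl u v w : dotp (u - v) w = dotp u w - dotp v w.
Proof. by rewrite dotpDl dotpNl. Qed.

Lemma dotpDr u v w : dotp u (v + w) = dotp u v + dotp u w.
Proof. by rewrite dotpC dotpDl !(dotpC u). Qed.

Lemma dotpZr a u v : dotp u (a *: v) = a * dotp u v.
Proof. by rewrite dotpC dotpZl dotpC. Qed.

Lemma dotpBr u v w : dotp u (v - w) = dotp u v - dotp u w.
Proof. by rewrite !(dotpC u) dotpBl. Qed.

Lemma dotp0l v : dotp 0 v = 0.
Proof. by rewrite -(scale0r 0) dotpZl mul0r. Qed.

Lemma dotp0r u : dotp u 0 = 0.
Proof. by rewrite dotpC dotp0l. Qed.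

Lemma dotpp_ge0 u : 0 <= dotp u u.
Proof. by apply: sumr_ge0 => i _; rewrite -expr2 sqr_ge0. Qed.

Lemma dotpp_eq0 u : (dotp u u == 0) = (u == 0).
Proof.
apply/idP/eqP => [|->]; last by rewrite dotp0l.
rewrite psumr_eq0 => [/allP u0|i _]; last by rewrite -expr2 sqr_ge0.
apply/rowP => i; rewrite !mxE.
have := implyP (u0 i (mem_index_enum _)) isT.
by rewrite mulf_eq0 orbb => /eqP.
Qed.

Lemma enorm_ge0 u : 0 <= enorm u.
Proof. exact: sqrtr_ge0. Qed.

Lemma enorm_sqr u : enorm u ^+ 2 = dotp u u.
Proof. by rewrite sqr_sqrtr // dotpp_ge0. Qed.

Lemma enorm_le u b : 0 <= b -> (enorm u <= b) = (dotp u u <= b ^+ 2).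
Proof. by move=> b0; rewrite -[b in LHS]ger0_norm // -sqrtr_sqr ler_sqrt ?sqr_ge0. Qed.

Lemma enorm0 : enorm (0 : V) = 0.
Proof. by rewrite /enorm dotp0l sqrtr0. Qed.

Lemma enorm_eq0 u : (enorm u == 0) = (u == 0).
Proof. by rewrite -dotpp_eq0 -enorm_sqr sqrf_eq0. Qed.

Lemma enorm_gt0 u : (0 < enorm u) = (u != 0).
Proof. by rewrite lt_neqAle enorm_ge0 andbT eq_sym enorm_eq0. Qed.

Lemma dotp_sqr_le u v : dotp u v ^+ 2 <= dotp u u * dotp v v.
Proof.
have [->|v_neq0] := eqVneq v 0; first by rewrite !dotp0r expr0n mulr0.
have vv_gt0 : 0 < dotp v v by rewrite lt_neqAle eq_sym dotpp_eq0 v_neq0 dotpp_ge0.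
have := dotpp_ge0 (dotp v v *: u - dotp u v *: v).
rewrite !(dotpBl, dotpBr, dotpZl, dotpZr) (dotpC v u) => ge0.
have : 0 <= dotp v v * (dotp u u * dotp v v - dotp u v ^+ 2) by lra.
by rewrite pmulr_rge0 // subr_ge0.
Qed.

Lemma dotp_norm_le u v : `|dotp u v| <= enorm u * enorm v.
Proof.
rewrite -(@ler_pXn2r _ 2) ?nnegrE ?mulr_ge0 ?enorm_ge0 //.
by rewrite real_normK ?num_real // exprMn !enorm_sqr dotp_sqr_le.
Qed.

Lemma dotp_le u v : dotp u v <= enorm u * enorm v.
Proof. exact: le_trans (ler_norm _) (dotp_norm_le u v). Qed.

Lemma enormD u v : enorm (u + v) <= enorm u + enorm v.
Proof.
rewrite enorm_le ?addr_ge0 ?enorm_ge0 // dotpDl !dotpDr (dotpC v u) sqrrD.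
by rewrite !enorm_sqr; have := dotp_le u v; lra.
Qed.

Lemma enormZ a u : enorm (a *: u) = `|a| * enorm u.
Proof. by rewrite /enorm dotpZl dotpZr mulrA -expr2 sqrtrM ?sqr_ge0 // sqrtr_sqr. Qed.

Lemma enormN u : enorm (- u) = enorm u.
Proof. by rewrite -scaleN1r enormZ normrN normr1 mul1r. Qed.

Lemma enormBC u v : enorm (u - v) = enorm (v - u).
Proof. by rewrite -enormN opprB. Qed.

Lemma enorm_sub_le u v w : enorm (u - w) <= enorm (u - v) + enorm (v - w).
Proof. by rewrite -[u - w](subrKA v) enormD. Qed.

Lemma enorm_coord u i : `|u ord0 i| <= enorm u.
Proof.
rewrite -(@ler_pXn2r _ 2) ?nnegrE ?enorm_ge0 // real_normK ?num_real //.
rewrite enorm_sqr /dotp (bigD1 i) //= -expr2 lerDl.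
by apply: sumr_ge0 => j _; rewrite -expr2 sqr_ge0.
Qed.

Lemma enorm_le_coord u b : 0 <= b -> (forall i, `|u ord0 i| <= b) ->
  enorm u <= n%:R * b.
Proof.
move=> b0 ub; rewrite enorm_le ?mulr_ge0 //.
apply: (@le_trans _ _ (\sum_(i < n) b ^+ 2)).
  apply: ler_sum => i _; rewrite -expr2 -real_normK ?num_real //.
  by rewrite lerXn2r ?nnegrE.
rewrite sumr_const card_ord -[_ *+ n]mulr_natl exprMn ler_wpM2r ?sqr_ge0 //.
by case: n => [|m]; rewrite ?expr0n // -natrX ler_nat expnS leq_pmulr.
Qed.

End EuclideanSpace.

Section ProductSpace.
Variables (R : realType) (n : nat).
Notation V := 'rV[R]_n.
Implicit Types (p q : V * V) (a : R).

Lemma dotp2_row_mx p q : dotp2 p q = dotp (row_mx p.1 p.2) (row_mx q.1 q.2).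
Proof.
rewrite /dotp2 /dotp big_split_ord /=.
by congr (_ + _); apply: eq_bigr => i _; rewrite ?row_mxEl ?row_mxEr.
Qed.

Lemma enorm2_row_mx p : enorm2 p = enorm (row_mx p.1 p.2).
Proof. by rewrite /enorm2 dotp2_row_mx. Qed.

Lemma dotp2Zl a p q : dotp2 (a *: p) q = a * dotp2 p q.
Proof. by rewrite /dotp2 !dotpZl mulrDr. Qed.

Lemma enorm2_ge0 p : 0 <= enorm2 p.
Proof. exact: sqrtr_ge0. Qed.

Lemma enorm2D p q : enorm2 (p + q) <= enorm2 p + enorm2 q.
Proof. by rewrite !enorm2_row_mx -add_row_mx enormD. Qed.

Lemma enorm2Z a p : enorm2 (a *: p) = `|a| * enorm2 p.
Proof. by rewrite !enorm2_row_mx -scale_row_mx enormZ. Qed.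

Lemma enorm2_sqr p : enorm2 p ^+ 2 = enorm p.1 ^+ 2 + enorm p.2 ^+ 2.
Proof. by rewrite enorm2_row_mx !enorm_sqr -dotp2_row_mx. Qed.

Lemma enorm_fst_le p : enorm p.1 <= enorm2 p.
Proof.
rewrite -(@ler_pXn2r _ 2) ?nnegrE ?enorm_ge0 ?enorm2_ge0 //.
by rewrite enorm2_sqr lerDl sqr_ge0.
Qed.

Lemma enorm_snd_le p : enorm p.2 <= enorm2 p.
Proof.
rewrite -(@ler_pXn2r _ 2) ?nnegrE ?enorm_ge0 ?enorm2_ge0 //.
by rewrite enorm2_sqr lerDr sqr_ge0.
Qed.

Lemma enorm2_le_add p : enorm2 p <= enorm p.1 + enorm p.2.
Proof.
case: p => u v /=.
have -> : (u, v) = (u, 0) + (0, v) by rewrite -[RHS]/(u + 0, 0 + v) addr0 add0r.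
apply: le_trans (enorm2D _ _) _.
by rewrite /enorm2 /dotp2 /= !dotp0l addr0 add0r.
Qed.

End ProductSpace.

Lemma eventually_invS_lt (R : realType) (e : R) : 0 < e ->
  exists N, forall k, (N <= k)%N -> k.+1%:R^-1 < e.
Proof.
move=> e0; exists (Num.truncn e^-1) => k le_Nk.
by rewrite invf_plt ?posrE ?ltr0Sn // (lt_le_trans (truncnS_gt _)) // ler_nat ltnS.
Qed.

Lemma exists_pos_le2 (R : realType) (a b : R) : 0 < a -> 0 < b ->
  exists2 d : R, 0 < d & d <= a /\ d <= b.
Proof.
by move=> a0 b0; exists (Num.min a b); rewrite ?lt_min ?a0 ?b0 ?ge_min ?lexx ?orbT.
Qed.

Section NormalCones.
Variables (R : realType) (n : nat) (Omega : 'rV[R]_n * 'rV[R]_n -> Prop).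
Implicit Types (z v y w : 'rV[R]_n * 'rV[R]_n) (c : R).

Lemma regular_normalZ z v c : 0 < c ->
  regular_normal Omega z v -> regular_normal Omega z (c *: v).
Proof.
move=> c0 normal e e0; have [d d0 hd] := normal (e / c) (divr_gt0 e0 c0).
exists d => // y Oy y_neq y_near; rewrite dotp2Zl.
apply: le_trans (ler_wpM2l (ltW c0) (hd y Oy y_neq y_near)) _.
by rewrite mulrA (mulrC c) divfK ?gt_eqF.
Qed.

Lemma seq_cvg2Z (zs : nat -> 'rV[R]_n * 'rV[R]_n) z c :
  seq_cvg2 zs z -> seq_cvg2 (fun k => c *: zs k) (c *: z).
Proof.
have c1_gt0 : 0 < `|c| + 1 by rewrite ltr_wpDl.
move=> cvg e e0; have [N hN] := cvg (e / (`|c| + 1)) (divr_gt0 e0 c1_gt0).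
exists N => k /hN lt_e; rewrite -scalerBr enorm2Z.
apply: le_lt_trans (_ : _ <= (`|c| + 1) * enorm2 (zs k - z)) _.
  by rewrite ler_wpM2r ?enorm2_ge0 ?lerDl.
by rewrite mulrC -ltr_pdivlMr.
Qed.

Lemma limiting_normalZ z v c : 0 < c ->
  limiting_normal Omega z v -> limiting_normal Omega z (c *: v).
Proof.
move=> c0 [zs [vs [Ozs cvg_zs cvg_vs normal]]].
exists zs, (fun k => c *: vs k); split => // [|k]; first exact: seq_cvg2Z.
exact: regular_normalZ.
Qed.

Lemma limiting_normal_approx z v e : 0 < e -> limiting_normal Omega z v ->
  exists y w, [/\ Omega y, regular_normal Omega y w,
                  enorm2 (y - z) < e & enorm2 (w - v) < e].
Proof.
move=> e0 [zs [vs [Ozs cvg_zs cvg_vs normal]]].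
have [N1 hN1] := cvg_zs e e0; have [N2 hN2] := cvg_vs e e0.
exists (zs (maxn N1 N2)), (vs (maxn N1 N2)).
by split; [exact: Ozs | exact: normal | apply: hN1; rewrite leq_maxl
           | apply: hN2; rewrite leq_maxr].
Qed.

Lemma enorm2_sub_le y z w : enorm2 (y - w) <= enorm2 (y - z) + enorm2 (z - w).
Proof. by rewrite -[y - w](subrKA z) enorm2D. Qed.

Lemma limiting_normal_closed z v :
  (forall e, 0 < e -> exists y w,
     [/\ limiting_normal Omega y w, enorm2 (y - z) < e & enorm2 (w - v) < e]) ->
  limiting_normal Omega z v.
Proof.
move=> approx.
have regular_near e : 0 < e -> exists yw : _ * _,
    [/\ Omega yw.1, regular_normal Omega yw.1 yw.2,
         enorm2 (yw.1 - z) < e & enorm2 (yw.2 - v) < e].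
  move=> e0; have e2_gt0 : 0 < e / 2 by rewrite divr_gt0.
  have [y [w [normal yz wv]]] := approx _ e2_gt0.
  have [y' [w' [Oy' normal' y'y w'w]]] := limiting_normal_approx e2_gt0 normal.
  exists (y', w'); split => //=.
  - by apply: le_lt_trans (enorm2_sub_le y' y z) _; lra.
  - by apply: le_lt_trans (enorm2_sub_le w' w v) _; lra.
have invS_gt0 k : 0 < k.+1%:R^-1 :> R by rewrite invr_gt0 ltr0Sn.
have [yw hyw] := choice (fun k => regular_near _ (invS_gt0 k)).
exists (fun k => (yw k).1), (fun k => (yw k).2).
split=> [k|e e0|e e0|k]; try by case: (hyw k).
- have [N hN] := eventually_invS_lt e0; exists N => k /hN.
  by case: (hyw k) => _ _ + _; exact: lt_trans.
- have [N hN] := eventually_invS_lt e0; exists N => k /hN.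
  by case: (hyw k) => _ _ _; exact: lt_trans.
Qed.

End NormalCones.

Section GraphNormals.
Variables (R : realType) (n : nat) (g : 'rV[R]_n -> 'rV[R]_n).
Implicit Types (a x p q z w : 'rV[R]_n) (r L : R).

Definition ball_lipschitz x r L := forall y1 y2,
  enorm (y1 - x) < r -> enorm (y2 - x) < r ->
  enorm (g y1 - g y2) <= L * enorm (y1 - y2).

Lemma ball_lipschitz_abs x r L : ball_lipschitz x r L -> ball_lipschitz x r `|L|.
Proof.
move=> lip y1 y2 y1x y2x; apply: le_trans (lip _ _ y1x y2x) _.
by rewrite ler_wpM2r ?enorm_ge0 ?ler_norm.
Qed.

Lemma ball_lipschitz_sub x a r s L : enorm (a - x) + s <= r ->
  ball_lipschitz x r L -> ball_lipschitz a s L.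
Proof.
move=> ball_sub lip y1 y2 y1a y2a; apply: lip.
- by have := enorm_sub_le y1 a x; lra.
- by have := enorm_sub_le y2 a x; lra.
Qed.

Lemma regular_normal_graph_lipschitz a p q r L : 0 < r -> 0 <= L ->
  ball_lipschitz a r L -> regular_normal (graph g) (a, g a) (p, q) ->
  enorm p <= L * enorm q.
Proof.
move=> r0 L0 lip normal; apply/ler_addgt0Pr => e e0.
have [->|p_neq0] := eqVneq p 0.
  by rewrite enorm0 addr_ge0 ?mulr_ge0 ?enorm_ge0 // ltW.
have p_gt0 : 0 < enorm p by rewrite enorm_gt0.
have L1_gt0 : 0 < 1 + L by lra.
(* Test the normal inequality at the graph point over y = a + (s / |p|) p:
   the first component contributes s |p|, the second at least - L s |q|. *)
have [d d0 hd] := normal (e / (1 + L)) (divr_gt0 e0 L1_gt0).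
have [m m_gt0 [m_d m_r]] := exists_pos_le2 d0 r0.
pose s := m / (2 * (1 + L)).
have s_gt0 : 0 < s by rewrite divr_gt0 ?mulr_gt0.
have [s_d s_r] : s * (1 + L) < d /\ s < r.
  have s_half : s * (1 + L) = m / 2 by rewrite /s; field; rewrite gt_eqF.
  have : s <= s * (1 + L) by nra.
  by rewrite s_half; split; lra.
pose y := a + (s / enorm p) *: p.
have ya : y - a = (s / enorm p) *: p by rewrite /y addrAC subrr add0r.
have ya_s : enorm (y - a) = s.
  by rewrite ya enormZ (gtr0_norm (divr_gt0 s_gt0 p_gt0)) divfK ?gt_eqF.
have gy_le : enorm (g y - g a) <= L * s.
  by rewrite -ya_s; apply: lip; rewrite ?subrr ?enorm0 ?ya_s.
pose h := (y - a, g y - g a).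
have h_gt0 : 0 < enorm2 h by rewrite (lt_le_trans _ (enorm_fst_le h)) //= ya_s.
have h_le : enorm2 h <= s * (1 + L).
  by apply: le_trans (enorm2_le_add h) _; rewrite /= ya_s; lra.
have := hd (y, g y) erefl h_gt0 (le_lt_trans h_le s_d).
rewrite /dotp2 /= ya dotpZr -enorm_sqr expr2 mulrA divfK ?gt_eqF //.
have dotq : - dotp q (g y - g a) <= enorm q * (L * s).
  apply: le_trans (_ : _ <= `|dotp q (g y - g a)|) _; first by rewrite -normrN ler_norm.
  by apply: le_trans (dotp_norm_le _ _) _; rewrite ler_wpM2l ?enorm_ge0.
have h_bound : e / (1 + L) * enorm2 h <= e * s.
  apply: le_trans (ler_wpM2l (divr_ge0 (ltW e0) (ltW L1_gt0)) h_le) _.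
  by rewrite (mulrC s) mulrA divfK ?gt_eqF.
move=> normal_ineq; rewrite -(ler_pM2l s_gt0); nra.
Qed.

Lemma limiting_normal_graph_lipschitz x z w r L : 0 < r ->
  ball_lipschitz x r L -> limiting_normal (graph g) (x, g x) (z, - w) ->
  enorm z <= `|L| * enorm w.
Proof.
move=> r0 /ball_lipschitz_abs lip [zs [vs [graph_zs cvg_zs cvg_vs normal]]].
apply/ler_addgt0Pr => e e0.
have L1_gt0 : 0 < 1 + `|L| by rewrite ltr_pwDl.
have r2_gt0 : 0 < r / 2 by lra.
have [d d_gt0 [d_r d_e]] := exists_pos_le2 r2_gt0 (divr_gt0 e0 L1_gt0).
have [N1 hN1] := cvg_zs d d_gt0; have [N2 hN2] := cvg_vs d d_gt0.
pose k := maxn N1 N2; move: (hN1 k (leq_maxl _ _)) (hN2 k (leq_maxr _ _)).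
case: (zs k) (graph_zs k) (normal k) => a b; rewrite /graph /= => ->.
case: (vs k) => p q normal_k.
move=> /(le_lt_trans (enorm_fst_le _)) /= a_near.
move=> /[dup] /(le_lt_trans (enorm_fst_le _)) /= p_near.
move=> /(le_lt_trans (enorm_snd_le _)); rewrite /= opprK => q_near.
have lip_a : ball_lipschitz a (r / 2) `|L|.
  by apply: ball_lipschitz_sub lip; lra.
have := regular_normal_graph_lipschitz r2_gt0 (normr_ge0 L) lip_a normal_k.
have := enorm_sub_le z p 0; have := enorm_sub_le q (- w) 0.
rewrite !subr0 opprK enormN enormBC => qw zp pq.
have : `|L| * enorm q <= `|L| * (enorm w + d) by rewrite ler_wpM2l //; lra.
have : d * (1 + `|L|) <= e by rewrite -ler_pdivlMr.
nra.
Qed.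

End GraphNormals.

Section Compactness.
Import numFieldNormedType.Exports.
Local Open Scope classical_set_scope.

Lemma compact_seq_cluster {T : topologicalType} (S : set T) (u : nat -> T) :
  compact S -> (forall k, S (u k)) ->
  exists q : T, forall A, nbhs q A -> forall N, exists2 k, (N <= k)%N & A (u k).
Proof.
move=> cS Su; have [|q [_ clq]] := cS (u @ \oo) _.
  by exists 0%N => // k _; exact: Su.
exists q => A qA N.
have uN : (u @ \oo) [set u k | k in [set k | (N <= k)%N]].
  by exists N => // k Nk; exists k.
by have [_ [[k Nk <-] Au]] := clq _ _ uN qA; exists k.
Qed.

Variables (R : realType) (n : nat).

Lemma nbhs_enorm_lt (q : 'rV[R]_n) (e : R) : 0 < e -> nbhs q [set v | enorm (v - q) < e].
Proof.
move=> e0; apply/nbhs_ballP; exists (e / n.+1%:R) => [|v qv]; first exact: divr_gt0.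
have coord_near i : `|(v - q) ord0 i| <= e / n.+1%:R.
  by have := qv.2 ord0 i; rewrite !mxE /ball /= distrC => /ltW.
apply: le_lt_trans (enorm_le_coord (ltW (divr_gt0 e0 (ltr0Sn _ _))) coord_near) _.
by rewrite mulrA ltr_pdivrMr ?ltr0Sn // mulrC ltr_pM2l // ltr_nat.
Qed.

Lemma compact_cube (M : R) :
  compact [set v : 'rV[R]_n | forall i, `[-M, M]%classic (v ord0 i)].
Proof.
by apply: (@rV_compact _ _ (fun=> `[-M, M]%classic)) => _; exact: segment_compact.
Qed.

Lemma bounded_triple_cluster (M : R) (u : nat -> 'rV[R]_n * ('rV[R]_n * 'rV[R]_n)) :
  (forall k, [/\ enorm (u k).1 <= M, enorm (u k).2.1 <= M & enorm (u k).2.2 <= M]) ->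
  exists q : _ * (_ * _), forall e, 0 < e -> forall N, exists2 k, (N <= k)%N &
    [/\ enorm ((u k).1 - q.1) < e, enorm ((u k).2.1 - q.2.1) < e
      & enorm ((u k).2.2 - q.2.2) < e].
Proof.
pose C := [set v : 'rV[R]_n | forall i, `[-M, M]%classic (v ord0 i)].
have in_C v : enorm v <= M -> C v.
  by move=> vM i; rewrite /= in_itv /= -ler_norml (le_trans (enorm_coord v i)).
move=> bounded; have [|q cl] := @compact_seq_cluster _ (C `*` (C `*` C)) u
  (compact_setX (@compact_cube M) (compact_setX (@compact_cube M) (@compact_cube M))).
  by move=> k; have [b1 b2 b3] := bounded k; do !split; exact: in_C.
exists q => e e0 N; apply: (cl [set t | [/\ enorm (t.1 - q.1) < e,
  enorm (t.2.1 - q.2.1) < e & enorm (t.2.2 - q.2.2) < e]]).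
exists ([set v | enorm (v - q.1) < e],
        [set p | enorm (p.1 - q.2.1) < e /\ enorm (p.2 - q.2.2) < e]).
  split; first exact: nbhs_enorm_lt.
  by exists ([set v | enorm (v - q.2.1) < e], [set v | enorm (v - q.2.2) < e]);
    [split; exact: nbhs_enorm_lt | move=> [a b] [/= ? ?]].
by move=> [a [b c]] [/= ? [? ?]]; split.
Qed.

End Compactness.

Section GeneralizedHessian.
Variables (R : realType) (n : nat) (g : 'rV[R]_n -> 'rV[R]_n).
Implicit Types (x w z : 'rV[R]_n) (c : R).

Lemma gen_hessianZ x w z c : 0 < c ->
  gen_hessian g x w z -> gen_hessian g x (c *: w) (c *: z).
Proof.
move=> c0 hess; rewrite /gen_hessian /coderiv -scalerN.
exact: limiting_normalZ c0 hess.
Qed.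

Lemma gen_hessian_closed x w z : continuous_map g ->
  (forall e, 0 < e -> exists x' w' z', [/\ enorm (x' - x) < e, enorm (w' - w) < e,
     enorm (z' - z) < e & gen_hessian g x' w' z']) ->
  gen_hessian g x w z.
Proof.
move=> cont approx; apply: limiting_normal_closed => e e0.
have e2_gt0 : 0 < e / 2 by rewrite divr_gt0.
have [d d0 gd] := cont x _ e2_gt0.
have [d' d'_gt0 [d'_d d'_e]] := exists_pos_le2 d0 e2_gt0.
have [x' [w' [z' [x'x w'w z'z hess]]]] := approx d' d'_gt0.
exists (x', g x'), (z', - w'); split => //.
- apply: le_lt_trans (enorm2_le_add _) _ => /=.
  by have := gd x' (lt_le_trans x'x d'_d); lra.
- apply: le_lt_trans (enorm2_le_add _) _ => /=.
  by rewrite opprK (addrC (- w')) (enormBC w); lra.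
Qed.

Lemma gen_hessian_lipschitz : locally_lipschitz g ->
  forall x, exists L, forall w z, gen_hessian g x w z -> enorm z <= L * enorm w.
Proof.
move=> lip x; have [L [r r0 lip_x]] := lip x.
by exists `|L| => w z; exact: (limiting_normal_graph_lipschitz r0 lip_x).
Qed.

End GeneralizedHessian.

Section LimitingArguments.
Variables (R : realType) (n : nat).
Implicit Types (u v x : 'rV[R]_n) (c : R).

Lemma gradient_sublevel_closed (phi : 'rV[R]_n -> R) g x c : is_gradient phi g ->
  (forall d, 0 < d -> exists2 y, enorm (y - x) < d & phi y <= c) -> phi x <= c.
Proof.
move=> grad approx; apply/ler_addgt0Pr => e e0.
have [d d0 hd] := grad x 1 ltr01.
have K_gt0 : 0 < enorm (g x) + 1 by rewrite ltr_wpDl ?enorm_ge0.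
have [d' d'_gt0 [d'_d d'_e]] := exists_pos_le2 d0 (divr_gt0 e0 K_gt0).
have [y yx phi_y] := approx d' d'_gt0.
have /ler_normlP[taylor _] := hd y (lt_le_trans yx d'_d).
have /ler_normlP[dot_ge _] := dotp_norm_le (g x) (y - x).
have : (enorm (g x) + 1) * enorm (y - x) <= e.
  by rewrite mulrC -ler_pdivlMr // (le_trans (ltW yx)).
nra.
Qed.

Lemma dotp_le0_closed u v :
  (forall e, 0 < e -> exists u' v',
     [/\ enorm (u' - u) < e, enorm (v' - v) < e & dotp u' v' < e]) ->
  dotp u v <= 0.
Proof.
move=> approx; apply/ler_addgt0Pr => e e0; rewrite add0r.
have K_gt0 : 0 < 2 + enorm u + enorm v by rewrite !ltr_wpDr ?enorm_ge0.
have [d d0 [d1 de]] := exists_pos_le2 ltr01 (divr_gt0 e0 K_gt0).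
have [u' [v' [uu vv dot_uv]]] := approx d d0.
have split_uv : dotp u v = dotp u' v' + dotp (u - u') v + dotp u' (v - v').
  by rewrite !(dotpBl, dotpBr); ring.
have bound1 : dotp (u - u') v <= d * enorm v.
  by apply: le_trans (dotp_le _ _) _; rewrite enormBC ler_wpM2r ?enorm_ge0 ?ltW.
have bound2 : dotp u' (v - v') <= (enorm u + 1) * d.
  apply: le_trans (dotp_le _ _) _; rewrite enormBC.
  have := enorm_sub_le u' u 0; rewrite !subr0 => u'_le.
  by apply: ler_pM; rewrite ?enorm_ge0 //; [lra | exact: ltW].
have : d * (2 + enorm u + enorm v) <= e by rewrite -ler_pdivlMr.
rewrite split_uv; nra.
Qed.

Lemma not_uniformly_posdef_seq (P : 'rV[R]_n -> Prop) g :
  ~ (exists2 kappa : R, 0 < kappa & forall x, P x ->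
       forall w z, gen_hessian g x w z -> kappa * enorm w ^+ 2 <= dotp z w) ->
  forall k : nat, exists t : _ * (_ * _),
    [/\ P t.1, gen_hessian g t.1 t.2.1 t.2.2, enorm2 t.2 = 1
       & dotp t.2.2 t.2.1 < k.+1%:R^-1].
Proof.
move=> not_unif k; apply: contrapT => no_t; apply: not_unif.
have kinv_gt0 : 0 < k.+1%:R^-1 :> R by rewrite invr_gt0 ltr0Sn.
exists k.+1%:R^-1 => // x Px w z hess; rewrite leNgt; apply/negP => small.
have w_neq0 : w != 0.
  by apply: contraTneq small => ->; rewrite dotp0r enorm0 expr0n mulr0 ltxx.
pose s := enorm2 (w, z).
have s_gt0 : 0 < s by apply: lt_le_trans (enorm_fst_le (w, z)); rewrite enorm_gt0.
have sinv_gt0 : 0 < s^-1 by rewrite invr_gt0.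
apply: no_t; exists (x, (s^-1 *: w, s^-1 *: z)); split => //=.
- exact: gen_hessianZ sinv_gt0 hess.
- by rewrite -[(_, _)]/(s^-1 *: (w, z)) enorm2Z gtr0_norm // mulVf ?gt_eqF.
- have w_le : enorm w ^+ 2 <= s ^+ 2.
    by rewrite lerXn2r ?nnegrE ?enorm_ge0 ?enorm2_ge0 ?(enorm_fst_le (w, z)).
  have -> : k.+1%:R^-1 = s^-1 * (s^-1 * (k.+1%:R^-1 * s ^+ 2)) :> R.
    by rewrite mulrA -expr2 mulrCA -exprMn mulVf ?gt_eqF // expr1n mulr1.
  rewrite /= dotpZl dotpZr !ltr_pM2l //.
  exact: lt_le_trans small (ler_wpM2l (ltW kinv_gt0) w_le).
Qed.

End LimitingArguments.

Theorem lemma3p6 (R : realType) (n : nat) (phi : 'rV[R]_n -> R)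
    (g : 'rV[R]_n -> 'rV[R]_n) (x0 : 'rV[R]_n) :
  C11 phi g ->
  (forall x, phi x <= phi x0 ->
     forall u z, u != 0 -> gen_hessian g x u z -> 0 < dotp z u) ->
  (exists M : R, forall x, phi x <= phi x0 -> enorm x <= M) ->
  exists2 kappa : R, 0 < kappa &
    forall x, phi x <= phi x0 ->
      forall w z, gen_hessian g x w z -> kappa * enorm w ^+ 2 <= dotp z w.
Proof.
move=> [grad_g cont_g lip_g] posdef [M bound_M].
apply: contrapT => /not_uniformly_posdef_seq /choice [t ht].
have M_ge0 : 0 <= M := le_trans (enorm_ge0 x0) (bound_M x0 (lexx _)).
have [|[X [W Z]] /= cluster] := @bounded_triple_cluster _ _ (M + 1) t.
  move=> k; have [Pk _ unit_k _] := ht k; have := bound_M _ Pk.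
  have := enorm_fst_le (t k).2; have := enorm_snd_le (t k).2.
  by rewrite unit_k; split; lra.
have X_sub : phi X <= phi x0.
  apply: (gradient_sublevel_closed grad_g) => d d0.
  by have [k _ [xk _ _]] := cluster d d0 0%N; exists (t k).1 => //; case: (ht k).
have hess : gen_hessian g X W Z.
  apply: (gen_hessian_closed cont_g) => e e0.
  have [k _ [xk wk zk]] := cluster e e0 0%N.
  by exists (t k).1, (t k).2.1, (t k).2.2; split => //; case: (ht k).
have ZW_le0 : dotp Z W <= 0.
  apply: dotp_le0_closed => e e0; have [N hN] := eventually_invS_lt e0.
  have [k /hN ke [_ wk zk]] := cluster e e0 N.
  by exists (t k).2.2, (t k).2.1; split => //; case: (ht k) => _ _ _ /lt_trans; apply.
have W_neq0 : W != 0.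
  apply/eqP => W0; have [L hL] := gen_hessian_lipschitz lip_g X.
  have := hL _ _ hess; rewrite W0 enorm0 mulr0 => Z_le0.
  have /eqP Z0 : Z == 0 by rewrite -enorm_eq0 eq_le Z_le0 enorm_ge0.
  have [|k _ [_ wk zk]] := cluster (1 / 2) _ 0%N; first lra.
  have [_ _ unit_k _] := ht k; have := enorm2_le_add (t k).2.
  by move: wk zk; rewrite W0 Z0 !subr0 unit_k; lra.
by have := posdef X X_sub W Z W_neq0 hess; lra.
Qed.
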